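(* Let $(X_n)_{n\ge1}$ be real random variables for which there exist constants $C_0\ge0$, $C_1,C_2>0$, $\beta\in(0,1)$ and $\gamma\in(0,1/\beta)$ such that for all $x>0$ and all $n\ge1$, $$\Pr\big(X_n\ge C_0n^{-\beta}+x\big)\le C_1\exp(-C_2\,n\,x^\gamma).$$ Let $\delta\in(\beta,\min(\gamma^{-1},1))$ and $\alpha:=\gamma(1-\delta)/\{\gamma(1-\delta)+(1-\gamma\delta)\}$. Then there exists a constant $C_4>0$ depending only on $C_0,C_1,C_2,\beta,\gamma,\delta$ such that for every $n\ge1$ and every $y\ge1$, $$\Pr\Big(\bar X_n\ge \frac{C_0}{1-\beta}n^{-\beta}+\frac{3}{1-\delta}n^{-\delta}y\Big)\le C_4\,n^{\alpha}\exp\big\{-C_2\,n^{\alpha(1-\gamma\delta)}y^\gamma\big\},$$ where $\bar X_n:=\frac1n\sum_{i=1}^n X_i$. *)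

From HB Require Import structures.
From mathcomp Require Import all_boot all_order all_algebra.
From mathcomp Require Import all_classical all_reals all_analysis.
Set Implicit Arguments. Unset Strict Implicit. Unset Printing Implicit Defensive.
Import Order.TTheory GRing.Theory Num.Theory.
Local Open Scope ring_scope.

Definition alpha_exp (R : realType) (gamma delta : R) : R :=
  gamma * (1 - delta) / (gamma * (1 - delta) + (1 - gamma * delta)).

Definition Xbar (R : realType) (T : Type) (X : nat -> T -> R) (n : nat) (w : T) : R :=
  (n%:R)^-1 * \sum_(1 <= i < n.+1) X i w.

From HB Require Import structures.
From mathcomp Require Import all_boot all_order all_algebra.
From mathcomp Require Import all_classical all_reals all_analysis.
From mathcomp Require Import ring lra.
Set Implicit Arguments. Unset Strict Implicit. Unset Printing Implicit Defensive.
Import Order.TTheory GRing.Theory Num.Theory.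
Local Open Scope ring_scope.
Local Open Scope classical_set_scope.

(* The deviation level T = C0/(1-beta) n^-beta + 3/(1-delta) n^-delta y is
   split into thresholds C0 i^-beta + x_i (1 <= i <= n) of total at most n T,
   so that {Xbar_n >= T} is covered by the events {X_i >= C0 i^-beta + x_i}
   (union bound).  With the cut-off M = n^alpha, K = floor M and the level
   N = n^(alpha (1 - gamma delta)), take x_i = y (N/i)^(1/gamma) for i <= K,
   which makes every exponent i x_i^gamma equal to N y^gamma, and
   x_i = 2 y i^-delta beyond K, where the exponent exceeds
   N y^gamma + (2^gamma - 1) i^(1 - gamma delta).  The first K terms thus
   contribute at most M exp(-C2 N y^gamma), the remaining ones a multiple of it
   summable against 1/i^2; alpha is exactly the exponent for which the
   thresholds fit in the budget n T. *)

Section ElementaryBounds.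
Variable R : realType.

(* Weighted AM-GM (Bernoulli) inequality u^s <= s u + (1 - s) for s in [0,1],
   a consequence of the convexity of expR. *)
Lemma powR_le_affine (s u : R) : 0 <= s <= 1 -> 0 <= u ->
  u `^ s <= s * u + (1 - s).
Proof.
case/andP=> s0 s1 u0; have [->|u_neq0] := eqVneq u 0.
  have [->|s_neq0] := eqVneq s 0; first by rewrite powRr0 mul0r subr0 add0r.
  by rewrite powR0 // mulr0 add0r subr_ge0.
have := convex_expR (Itv01 s0 s1) (ln u) 0.
rewrite !convRE /= expR0 mulr0 addr0 lnK ?posrE ?lt_neqAle 1?eq_sym ?u_neq0 //.
by rewrite /powR (negbTE u_neq0) mulrC mulr1.
Qed.

Lemma powR_ge1 (x r : R) : 0 <= r -> 1 <= x -> 1 <= x `^ r.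
Proof.
move=> r0 x1; have := @ge0_ler_powR _ r r0 1 x; rewrite powR1.
by apply; rewrite ?nnegrE ?ler01 // (le_trans ler01 x1).
Qed.

Lemma powR2_gt1 (r : R) : 0 < r -> 1 < 2 `^ r.
Proof.
by move=> r0; rewrite /powR pnatr_eq0 /= expR_gt1 mulr_gt0 // ln_gt0 // ltr1n.
Qed.

Lemma truncn_lt_powR (M p : R) (j : nat) : 0 <= M -> 0 <= p ->
  (Num.truncn M < j)%N -> M `^ p <= j%:R `^ p.
Proof.
move=> M0 p0; rewrite truncn_lt_nat // => Mj.
by rewrite ge0_ler_powR ?nnegrE ?ler0n // ltW.
Qed.

(* One step of the comparison of sum_i i^-s with the integral of x^-s:
   k^(1-s) + (1-s)(k+1)^-s <= (k+1)^(1-s). *)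
Lemma powR_increment (s : R) (k : nat) : 0 <= s < 1 ->
  k%:R `^ (1 - s) + (1 - s) * k.+1%:R `^ (- s) <= k.+1%:R `^ (1 - s).
Proof.
case/andP=> s0 s1; set a : R := k.+1%:R; set u := k%:R / a.
have a0 : 0 < a by rewrite ltr0n.
have u0 : 0 <= u by rewrite divr_ge0 // ltW.
have ku : k%:R = u * a by rewrite /u mulfVK // gt_eqF.
have aE : a `^ (1 - s) = a * a `^ (- s).
  by rewrite powRD ?powRr1 ?(ltW a0) //; apply/implyP => _; rewrite gt_eqF.
have s01' : 0 <= 1 - s <= 1 by apply/andP; split; lra.
have affine := @powR_le_affine (1 - s) u s01' u0.
have key : u `^ (1 - s) * a + (1 - s) <= a.
  have := ler_wpM2r (ltW a0) affine.
  have -> : ((1 - s) * u + (1 - (1 - s))) * a = (1 - s) * k%:R + s * a.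
    by rewrite ku; ring.
  have -> : a = k%:R + 1 by rewrite /a -natr1.
  lra.
rewrite ku (powRM _ u0 (ltW a0)) aE.
have -> : u `^ (1 - s) * (a * a `^ (- s)) + (1 - s) * a `^ (- s)
        = (u `^ (1 - s) * a + (1 - s)) * a `^ (- s) by ring.
by rewrite ler_pM2r ?powR_gt0.
Qed.

Lemma sum_powR_le (s : R) (n K : nat) : 0 <= s < 1 ->
  \sum_(1 <= i < n.+1 | (i <= K)%N) i%:R `^ (- s)
    <= (minn n K)%:R `^ (1 - s) / (1 - s).
Proof.
move=> s01; have s1 : 0 < 1 - s by case/andP: s01 => _; rewrite subr_gt0.
rewrite big_mkcond /=; elim: n => [|n IH].
  by rewrite big_geq // divr_ge0 ?powR_ge0 // ltW.
rewrite big_nat_recr //; case: (leqP n.+1 K) => [leSK|ltKS]; last first.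
  by rewrite ltnS in ltKS; rewrite /= addr0; rewrite (minn_idPr ltKS) in IH.
rewrite (minn_idPl (ltnW leSK)) in IH.
apply: le_trans (lerD IH (lexx _)) _.
have := @powR_increment s n s01.
have s1' : 0 < (1 - s)^-1 by rewrite invr_gt0.
rewrite -(ler_pM2r s1') mulrDl (mulrC (1 - s) (n.+1%:R `^ (- s))).
by rewrite mulfK ?gt_eqF.
Qed.

Lemma sum_powR_le_nat (s : R) (n : nat) : 0 <= s < 1 ->
  \sum_(1 <= i < n.+1) i%:R `^ (- s) <= n%:R `^ (1 - s) / (1 - s).
Proof.
move=> s01; have := sum_powR_le n n s01; rewrite minnn; apply: le_trans.
rewrite le_eqVlt [X in X == _]big_nat_cond [X in _ == X]big_nat_cond; apply/orP; left.
by apply/eqP; apply: eq_bigl => i; rewrite andbT ltnS -andbA andbb.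
Qed.

Lemma count_le (n K : nat) :
  \sum_(1 <= i < n.+1 | (i <= K)%N) (1 : R) <= (minn n K)%:R.
Proof.
have := @sum_powR_le 0 n K ltac:(by rewrite lexx ltr01).
by rewrite oppr0 addr0 divr1 powRr1 ?ler0n //; under eq_bigr do rewrite powRr0.
Qed.

(* sum_{i=1}^n 1/i^2 <= 2, via 1/i^2 <= 2 (1/i - 1/(i+1)). *)
Lemma sum_inv_sq_le (n : nat) : \sum_(1 <= i < n.+1) (i%:R ^+ 2)^-1 <= 2 :> R.
Proof.
suff : \sum_(1 <= i < n.+1) (i%:R ^+ 2)^-1 <= 2 - 2 / n.+1%:R :> R.
  by move/le_trans; apply; rewrite gerBl divr_ge0.
elim: n => [|n IH]; first by rewrite big_geq // divr1 subrr.
rewrite big_nat_recr //=.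
have a1 : 1 <= n.+1%:R :> R by rewrite ler1n.
have telescope : (n.+1%:R ^+ 2)^-1 <= 2 / n.+1%:R - 2 / n.+2%:R :> R.
  have -> : n.+2%:R = n.+1%:R + 1 :> R by rewrite -natr1.
  rewrite -subr_ge0.
  have -> : 2 / n.+1%:R - 2 / (n.+1%:R + 1) - (n.+1%:R ^+ 2)^-1
          = (n.+1%:R - 1) / (n.+1%:R ^+ 2 * (n.+1%:R + 1)) :> R.
    by field; rewrite !gt_eqF //; lra.
  by rewrite divr_ge0 ?subr_ge0 // mulr_ge0 ?sqr_ge0 //; lra.
by apply: le_trans (lerD IH telescope) _; rewrite addrA subrK.
Qed.

Lemma expR_neg_le_inv_sq (a p : R) (k i : nat) :
  0 < a -> 2 <= p * k.+1%:R -> (1 <= i)%N ->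
  expR (- (a * i%:R `^ p)) <= k.+1`!%:R / a ^+ k.+1 * (i%:R ^+ 2)^-1.
Proof.
move=> a0 pk i1; have i1' : 1 <= i%:R :> R by rewrite ler1n.
set t := a * i%:R `^ p; have t0 : 0 <= t by rewrite mulr_ge0 ?powR_ge0 ?ltW.
have fact0 : 0 < k.+1`!%:R :> R by rewrite ltr0n fact_gt0.
have taylor : t ^+ k.+1 / k.+1`!%:R <= expR t.
  by have := expR_ge1Dxn k t0; lra.
have poly : a ^+ k.+1 * i%:R ^+ 2 <= t ^+ k.+1.
  rewrite /t exprMn ler_pM2l ?exprn_gt0 //.
  rewrite -(powR_mulrn _ (powR_ge0 _ _)) -powRrM -(powR_mulrn _ (ler0n _ _)).
  exact: ler_powR.
have -> : k.+1`!%:R / a ^+ k.+1 / i%:R ^+ 2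
        = (a ^+ k.+1 * i%:R ^+ 2 / k.+1`!%:R)^-1.
  by rewrite invf_div -mulrA -invfM.
have i0 : 0 < i%:R :> R by rewrite ltr0n.
rewrite expRN lef_pV2 ?posrE ?expR_gt0 ?divr_gt0 ?mulr_gt0 ?exprn_gt0 //.
by apply: le_trans taylor; rewrite ler_pM2r ?invr_gt0.
Qed.
End ElementaryBounds.

Section Thresholds.
Variables (R : realType) (gamma delta y N : R) (K : nat).
Hypotheses (gamma0 : 0 < gamma) (delta0 : 0 < delta) (delta1 : delta < 1)
  (gamma_delta : gamma * delta <= 1) (y1 : 1 <= y) (N0 : 0 < N).
Let y0 : 0 < y := lt_le_trans ltr01 y1.

(* The threshold x_i granted to X_i on top of its bias C0 i^-beta. *)
Definition threshold (i : nat) : R :=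
  if (i <= K)%N then y * N `^ gamma^-1 * i%:R `^ (- gamma^-1)
  else 2 * y * i%:R `^ (- delta).

Lemma threshold_gt0 (i : nat) : (1 <= i)%N -> 0 < threshold i.
Proof.
move=> i1; have i0 : 0 < i%:R :> R by rewrite ltr0n.
by rewrite /threshold; case: ifP => _; rewrite !mulr_gt0 ?powR_gt0.
Qed.

Lemma sum_threshold_le (n : nat) :
  \sum_(1 <= i < n.+1) threshold i <=
  (y * N `^ gamma^-1 * (minn n K)%:R `^ (1 - delta)
   + 2 * y * n%:R `^ (1 - delta)) / (1 - delta).
Proof.
have d01 : 0 <= delta < 1 by rewrite delta1 ltW.
have c0 : 0 <= y * N `^ gamma^-1 by rewrite mulr_ge0 ?powR_ge0 ?ltW.
have low : \sum_(1 <= i < n.+1 | (i <= K)%N) threshold i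
    <= y * N `^ gamma^-1 * (minn n K)%:R `^ (1 - delta) / (1 - delta).
  apply: (@le_trans _ _ (y * N `^ gamma^-1
     * \sum_(1 <= i < n.+1 | (i <= K)%N) i%:R `^ (- delta))); last first.
    by rewrite -[X in _ <= X]mulrA ler_wpM2l // sum_powR_le.
  rewrite mulr_sumr big_nat_cond [X in _ <= X]big_nat_cond.
  apply: ler_sum => i /andP[/andP[i1 _] iK]; rewrite /threshold iK.
  have dg : delta <= gamma^-1 by rewrite -[gamma^-1]mulr1 ler_pdivlMl.
  by rewrite ler_wpM2l //; apply: ler_powR; rewrite ?ler1n ?lerN2.
have high : \sum_(1 <= i < n.+1 | ~~ (i <= K)%N) threshold i
    <= 2 * y * n%:R `^ (1 - delta) / (1 - delta).
  apply: (@le_trans _ _ (2 * y * \sum_(1 <= i < n.+1) i%:R `^ (- delta))).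
    rewrite mulr_sumr big_mkcond /= big_nat [X in _ <= X]big_nat.
    apply: ler_sum => i _; rewrite /threshold.
    by case: (i <= K)%N => //=; rewrite !mulr_ge0 ?powR_ge0 ?ltW.
  rewrite -[X in _ <= X]mulrA ler_wpM2l ?sum_powR_le_nat //.
  by rewrite mulr_ge0 ?ltW.
by rewrite (bigID (fun i => (i <= K)%N)) /= mulrDl; exact: lerD low high.
Qed.

Lemma threshold_rate_low (i : nat) : (1 <= i <= K)%N ->
  i%:R * threshold i `^ gamma = N * y `^ gamma.
Proof.
case/andP=> i1 iK; have i0 : 0 < i%:R :> R by rewrite ltr0n.
rewrite /threshold iK !powRM ?powR_ge0 ?mulr_ge0 ?(ltW y0) //.
  rewrite -!powRrM mulVf ?gt_eqF // powRr1 ?(ltW N0) //.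
  rewrite mulNr mulVf ?gt_eqF // powR_inv1 ?(ltW i0) //.
  by rewrite mulrC mulfVK ?gt_eqF // mulrC.
by rewrite powR_ge0.
Qed.

Lemma threshold_rate_high (i : nat) : (K < i)%N ->
  N <= i%:R `^ (1 - gamma * delta) ->
  N * y `^ gamma + (2 `^ gamma - 1) * i%:R `^ (1 - gamma * delta)
    <= i%:R * threshold i `^ gamma.
Proof.
move=> Ki hN; have i0 : 0 < i%:R :> R by rewrite ltr0n; apply: leq_ltn_trans Ki.
rewrite /threshold leqNgt Ki /= !powRM ?powR_ge0 ?mulr_ge0 ?(ltW y0) //.
have -> : i%:R * (2 `^ gamma * y `^ gamma * i%:R `^ (- delta) `^ gamma)
    = 2 `^ gamma * y `^ gamma * i%:R `^ (1 - gamma * delta).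
  rewrite -powRrM [X in _ = _ * X]powRD; last by apply/implyP => _; rewrite gt_eqF.
  by rewrite powRr1 ?(ltW i0) // mulNr (mulrC delta); ring.
set q := i%:R `^ (1 - gamma * delta).
set Y := y `^ gamma.
set two := 2 `^ gamma.
have Y1 : 1 <= Y := powR_ge1 (ltW gamma0) y1.
have two1 : 1 <= two by apply: powR_ge1; [exact: ltW | rewrite ler1n].
have q0 : 0 <= q by rewrite powR_ge0.
have NYq : N * Y <= q * Y by rewrite ler_wpM2r // (le_trans ler01 Y1).
have qY : (two - 1) * q <= (two - 1) * (q * Y).
  by rewrite ler_wpM2l ?subr_ge0 // -{1}[q]mulr1 ler_wpM2l.
have -> : two * Y * q = q * Y + (two - 1) * (q * Y) by ring.
exact: lerD NYq qY.
Qed.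

Lemma sum_threshold_budget (C0 beta M : R) (n : nat) :
  0 <= C0 -> 0 <= beta < 1 -> (1 <= n)%N -> K%:R <= M ->
  N `^ gamma^-1 * M `^ (1 - delta) = n%:R `^ (1 - delta) ->
  \sum_(1 <= i < n.+1) (C0 * i%:R `^ (- beta) + threshold i)
    <= n%:R * (C0 / (1 - beta) * n%:R `^ (- beta)
               + 3 / (1 - delta) * n%:R `^ (- delta) * y).
Proof.
move=> C00 b01 n1 KM balance; have n0 : 0 < n%:R :> R by rewrite ltr0n.
have d1 : 0 < 1 - delta by rewrite subr_gt0.
have powR_split (s : R) : n%:R `^ (1 - s) = n%:R * n%:R `^ (- s).
  by rewrite powRD ?powRr1 ?(ltW n0) //; apply/implyP => _; rewrite gt_eqF.
rewrite big_split /= -mulr_sumr mulrDr; apply: lerD.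
  apply: le_trans (ler_wpM2l C00 (sum_powR_le_nat n b01)) _.
  by rewrite powR_split le_eqVlt; apply/orP; left; apply/eqP; ring.
apply: le_trans (sum_threshold_le n) _.
apply: (@le_trans _ _ ((y * n%:R `^ (1 - delta) + 2 * y * n%:R `^ (1 - delta))
                       / (1 - delta))).
  rewrite ler_pM2r ?invr_gt0 // lerD2r -balance mulrA.
  have minM : (minn n K)%:R <= M by rewrite (le_trans _ KM) // ler_nat geq_minr.
  rewrite ler_wpM2l ?mulr_ge0 ?powR_ge0 ?(ltW y0) // ge0_ler_powR ?nnegrE ?ler0n //.
    by rewrite subr_ge0 ltW.
  exact: le_trans (ler0n _ _) minM.
by rewrite powR_split le_eqVlt; apply/orP; left; apply/eqP; ring.
Qed.

Variables (C1 C2 : R) (k : nat).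
Hypotheses (C1_gt0 : 0 < C1) (C2_gt0 : 0 < C2)
  (k_large : 2 <= (1 - gamma * delta) * k.+1%:R)
  (cutoff : forall j : nat, (K < j)%N -> N <= j%:R `^ (1 - gamma * delta)).

Definition tail_const : R := k.+1`!%:R / (C2 * (2 `^ gamma - 1)) ^+ k.+1.

Lemma tail_rate_gt0 : 0 < C2 * (2 `^ gamma - 1).
Proof. by rewrite mulr_gt0 // subr_gt0 powR2_gt1. Qed.

Lemma tail_const_ge0 : 0 <= tail_const.
Proof. by rewrite divr_ge0 // exprn_ge0 // ltW // tail_rate_gt0. Qed.

Lemma threshold_term_le (i : nat) : (1 <= i)%N ->
  expR (- (C2 * i%:R * threshold i `^ gamma))
    <= expR (- (C2 * N * y `^ gamma))
       * ((if (i <= K)%N then 1 else 0) + tail_const * (i%:R ^+ 2)^-1).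
Proof.
move=> i1; have tail0 : 0 <= tail_const * (i%:R ^+ 2)^-1.
  by rewrite mulr_ge0 ?tail_const_ge0 // invr_ge0 exprn_ge0.
have [iK|Ki] := leqP i K.
  rewrite -mulrA threshold_rate_low ?i1 // mulrA.
  by rewrite mulrDr mulr1 lerDl mulr_ge0 ?expR_ge0.
rewrite add0r; set p := 1 - gamma * delta.
apply: (@le_trans _ _ (expR (- (C2 * (N * y `^ gamma + (2 `^ gamma - 1) * i%:R `^ p))))).
  by rewrite ler_expR lerN2 -mulrA ler_pM2l // threshold_rate_high // cutoff.
rewrite mulrDr opprD expRD mulrA ler_pM2l ?expR_gt0 //.
by rewrite mulrA; apply: expR_neg_le_inv_sq; rewrite ?tail_rate_gt0.
Qed.

(* Summing: at most K <= M equal terms, plus a convergent series. *)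
Lemma sum_threshold_tail (n : nat) (M : R) : 1 <= M -> K%:R <= M ->
  \sum_(1 <= i < n.+1) C1 * expR (- (C2 * i%:R * threshold i `^ gamma))
    <= C1 * (1 + 2 * tail_const) * M * expR (- (C2 * N * y `^ gamma)).
Proof.
move=> M1 KM; set E := expR (- (C2 * N * y `^ gamma)).
apply: (@le_trans _ _ (C1 * E * (\sum_(1 <= i < n.+1 | (i <= K)%N) 1
                    + tail_const * \sum_(1 <= i < n.+1) (i%:R ^+ 2)^-1))).
  rewrite [X in _ <= _ * (X + _)]big_mkcond /= mulr_sumr -big_split mulr_sumr.
  rewrite big_nat [X in _ <= X]big_nat; apply: ler_sum => i /andP[i1 _].
  by rewrite -[X in _ <= X]mulrA ler_pM2l // threshold_term_le.
have count : \sum_(1 <= i < n.+1 | (i <= K)%N) 1 <= M.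
  by apply: le_trans (count_le R n K) _; apply: le_trans KM; rewrite ler_nat geq_minr.
have series : tail_const * \sum_(1 <= i < n.+1) (i%:R ^+ 2)^-1 <= 2 * tail_const * M.
  apply: le_trans (ler_wpM2l tail_const_ge0 (sum_inv_sq_le R n)) _.
  by rewrite mulrC -[X in X <= _]mulr1 ler_wpM2l // mulr_ge0 ?tail_const_ge0.
have -> : C1 * (1 + 2 * tail_const) * M * E = C1 * E * (M + 2 * tail_const * M) by ring.
by rewrite ler_wpM2l ?mulr_ge0 ?expR_ge0 ?(ltW C1_gt0) // lerD.
Qed.
End Thresholds.

Lemma sum_exceeds_some (R : realDomainType) (x t : nat -> R) (b : R) (n : nat) :
  (1 <= n)%N -> \sum_(1 <= i < n.+1) t i <= n%:R * b ->
  n%:R * b <= \sum_(1 <= i < n.+1) x i ->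
  exists2 i, (1 <= i <= n)%N & t i <= x i.
Proof.
move=> n1 tb bx.
have [//|none] := pselect (exists2 i, (1 <= i <= n)%N & t i <= x i).
have lt i : (1 <= i < n.+1)%N -> x i < t i.
  by rewrite ltnS => i_range; rewrite ltNge; apply/negP => ti; apply: none; exists i.
have := ltr_sum_nat (n1 : (1 < n.+1)%N) lt.
by rewrite ltNge (le_trans tb bx).
Qed.

Lemma mean_tail_union_bound d (T : measurableType d) (R : realType)
    (mu : {measure set T -> \bar R}) (X : nat -> T -> R) (t : nat -> R)
    (b : R) (n : nat) :
  (forall i, measurable_fun setT (X i)) -> (1 <= n)%N ->
  \sum_(1 <= i < n.+1) t i <= n%:R * b ->
  (mu [set w | (b <= Xbar X n w)%R]
    <= \sum_(1 <= i < n.+1) mu [set w | (t i <= X i w)%R])%E.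
Proof.
move=> mX n1 tb; have n0 : 0 < n%:R :> R by rewrite ltr0n.
have mLe (f g : T -> R) : measurable_fun setT f -> measurable_fun setT g ->
    measurable [set w | f w <= g w].
  by move=> mf mg; rewrite -[X in measurable X]setTI; exact: measurable_fun_le.
rewrite big_add1 /= big_mkord.
apply: (@content_subadditive _ _ _ mu _ (fun j => [set w | (t j.+1 <= X j.+1 w)%R])).
- by move=> j _; exact: mLe (measurable_cst _) (mX _).
- apply: mLe (measurable_cst _) _.
  by apply: measurable_realfun.measurable_funM (measurable_cst _) _; exact: measurable_sum.
- move=> w /= bw.
  rewrite -(bigcup_mkord n (fun j => [set w | (t j.+1 <= X j.+1 w)%R])).
  have [|i /andP[i1 iN] ti] := @sum_exceeds_some _ (X ^~ w) t b n n1 tb.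
    by move: bw; rewrite /Xbar ler_pdivlMl.
  by exists i.-1; rewrite ?prednK //= -ltnS prednK.
Qed.

Lemma alpha_exp_ge0 (R : realType) (gamma delta : R) :
  0 < gamma -> delta < 1 -> gamma * delta < 1 -> 0 <= alpha_exp gamma delta.
Proof.
move=> g0 d1 gd1; have g0' := ltW g0.
have d1' : 0 <= 1 - delta by rewrite subr_ge0 (ltW d1).
have gd1' : 0 <= 1 - gamma * delta by rewrite subr_ge0 (ltW gd1).
by apply: divr_ge0; [exact: mulr_ge0 | exact: addr_ge0 (mulr_ge0 _ _) _].
Qed.

Lemma alpha_exp_balance (R : realType) (gamma delta x : R) :
  0 < gamma -> delta < 1 -> gamma * delta < 1 -> 0 < x ->
  (x `^ (alpha_exp gamma delta * (1 - gamma * delta))) `^ gamma^-1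
    * (x `^ alpha_exp gamma delta) `^ (1 - delta) = x `^ (1 - delta).
Proof.
move=> g0 d1 gd1 x0.
have den0 : 0 < gamma * (1 - delta) + (1 - gamma * delta).
  by rewrite addr_gt0 ?mulr_gt0 ?subr_gt0.
rewrite -!powRrM -powRD; last by apply/implyP => _; rewrite gt_eqF.
congr (_ `^ _); rewrite /alpha_exp; field.
by rewrite !gt_eqF.
Qed.

Theorem proposition4 (R : realType) (C0 C1 C2 beta gamma delta : R) :
  0 <= C0 -> 0 < C1 -> 0 < C2 ->
  0 < beta < 1 -> 0 < gamma < beta^-1 ->
  beta < delta -> delta < Num.min gamma^-1 1 ->
  exists C4 : R, 0 < C4 /\
    forall (d : measure_display) (T : measurableType d) (P : probability T R)
           (X : nat -> T -> R),
      (forall n, measurable_fun setT (X n)) ->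
      (forall (n : nat) (x : R), (1 <= n)%N -> 0 < x ->
         (P [set w | (C0 * n%:R `^ (- beta) + x <= X n w)%R]
           <= (C1 * expR (- (C2 * n%:R * x `^ gamma)))%:E)%E) ->
      forall (n : nat) (y : R), (1 <= n)%N -> 1 <= y ->
        (P [set w | (C0 / (1 - beta) * n%:R `^ (- beta)
                   + 3 / (1 - delta) * n%:R `^ (- delta) * y <= Xbar X n w)%R]
          <= (C4 * n%:R `^ (alpha_exp gamma delta)
              * expR (- (C2 * n%:R `^ (alpha_exp gamma delta * (1 - gamma * delta))
                         * y `^ gamma)))%:E)%E.
Proof.
move=> C00 C10 C20 /andP[b0 b1] /andP[g0 _] bd; rewrite lt_min => /andP[dg d1].
have d0 : 0 < delta := lt_trans b0 bd.
have gd1 : gamma * delta < 1 by move: dg; rewrite -[gamma^-1]mulr1 ltr_pdivlMl.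
set p := 1 - gamma * delta; have p0 : 0 < p by rewrite subr_gt0.
pose k := Num.truncn (2 / p).
have k_large : 2 <= p * k.+1%:R by rewrite mulrC -ler_pdivrMr // ltW // truncnS_gt.
have c0 := tail_const_ge0 g0 k C20.
exists (C1 * (1 + 2 * tail_const gamma C2 k)); split.
  by rewrite mulr_gt0 // (lt_le_trans ltr01) // lerDl mulr_ge0.
move=> dd T P X mX tail n y n1 y1.
set a := alpha_exp gamma delta; set M := n%:R `^ a; set N := n%:R `^ (a * p).
set K := Num.truncn M.
have n0 : 0 < n%:R :> R by rewrite ltr0n.
have M1 : 1 <= M by rewrite powR_ge1 ?ler1n ?alpha_exp_ge0.
have KM : K%:R <= M by rewrite truncn_le (le_trans ler01 M1).
have cutoff j : (K < j)%N -> N <= j%:R `^ p.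
  by rewrite /N powRrM; apply: truncn_lt_powR; rewrite ?(le_trans ler01 M1) ?ltW.
have b01 : 0 <= beta < 1 by rewrite (ltW b0) b1.
have budget := sum_threshold_budget g0 d0 d1 (ltW gd1) y1 C00 b01 n1 KM
  (alpha_exp_balance g0 d1 gd1 n0).
apply: le_trans (mean_tail_union_bound P mX n1 budget) _.
apply: (@le_trans _ _ (\sum_(1 <= i < n.+1)
    (C1 * expR (- (C2 * i%:R * threshold gamma delta y N K i `^ gamma)))%:E)%E).
  rewrite big_nat [X in (_ <= X)%E]big_nat; apply: lee_sum => i /andP[i1 _].
  exact: tail i _ i1 (threshold_gt0 gamma delta K y1 (powR_gt0 (a * p) n0) i1).
rewrite sumEFin lee_fin.
exact: (sum_threshold_tail g0 y1 (powR_gt0 (a * p) n0) C10 C20 k_large cutoff n M1 KM).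
Qed.
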